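(* Let $A$ be a real symmetric $r$-matrix of order $n$. If $\eta^{(p)}(A)=n^{-r/p}|\Sigma A|$ for some $p>1$, then $A$ is regular.
   Context: A cubical $r$-matrix of order $n$ is a function $A$ on $[n]^r$ with entries $a_{i_1,\ldots,i_r}$; symmetric means invariant under permutations of indices. $\Sigma B$ denotes the sum of all entries of a matrix $B$. $P_A(\mathbf{x})=\sum a_{i_1,\ldots,i_r}x_{i_1}\cdots x_{i_r}$ and $\eta^{(p)}(A)=\max\{|P_A(\mathbf{x})|:\mathbf{x}\in\mathbb{R}^n,|\mathbf{x}|_p=1\}$. For $k\in[r]$, $s\in[n]$, the slice $A^{(k)}_s$ is the $(r-1)$-matrix obtained by fixing $i_k=s$. $A$ is regular if for every $k\in[r]$, $\Sigma A^{(k)}_1=\cdots=\Sigma A^{(k)}_n$. *)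

From mathcomp Require Import all_boot all_order all_algebra all_fingroup.
From mathcomp Require Import all_classical all_reals all_analysis.
Set Implicit Arguments. Unset Strict Implicit. Unset Printing Implicit Defensive.
Import Order.TTheory GRing.Theory Num.Theory.
Local Open Scope ring_scope.
Local Open Scope classical_set_scope.

Definition mindex (r n : nat) := {ffun 'I_r -> 'I_n}.

Definition cmatrix (R : realType) (r n : nat) := mindex r n -> R.

Section CMatrix.
Context {R : realType} {r n : nat}.

Definition cm_symmetric (A : cmatrix R r n) : Prop :=
  forall (s : {perm 'I_r}) (i : mindex r n), A [ffun k => i (s k)] = A i.

Definition cm_sum (A : cmatrix R r n) : R := \sum_(i : mindex r n) A i.

Definition slice_sum (A : cmatrix R r n) (k : 'I_r) (s : 'I_n) : R :=
  \sum_(i : mindex r n | i k == s) A i.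

Definition cm_regular (A : cmatrix R r n) : Prop :=
  forall (k : 'I_r) (s t : 'I_n), slice_sum A k s = slice_sum A k t.

Definition cm_form (A : cmatrix R r n) (x : 'I_n -> R) : R :=
  \sum_(i : mindex r n) A i * \prod_(k < r) x (i k).

Definition pnorm (p : R) (x : 'I_n -> R) : R :=
  (\sum_(j < n) `|x j| `^ p) `^ (p^-1).

(* eta^(p)(A) = max { |P_A(x)| : |x|_p = 1 } (the max exists by compactness;
   we take the supremum of the set, which equals that maximum) *)
Definition eta (p : R) (A : cmatrix R r n) : R :=
  sup [set `|cm_form A x| | x in [set x : 'I_n -> R | pnorm p x = 1]].

End CMatrix.

(* Put c = n^(-1/p). The uniform vector c(1,...,1) has p-norm 1 and
   |P_A(c,...,c)| = c^r |Sigma A|, so the hypothesis says that it maximises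
   |P_A(x)| / |x|_p^r. Along a line c + u w with sum_j w_j = 0 the p-norm is
   stationary at u = 0, hence so is P_A: sum_i a_i sum_k w_(i_k) = 0. For
   w = e_s - e_t this sum is sum_k (Sigma A^(k)_s - Sigma A^(k)_t), and by
   symmetry its r terms are equal. *)

From mathcomp Require Import all_boot all_order all_algebra all_fingroup.
From mathcomp Require Import all_classical all_reals all_analysis.
From mathcomp Require Import lra.
Import Order.TTheory GRing.Theory Num.Theory.
Local Open Scope ring_scope.

Section RealDerivatives.
Context {R : realType}.
Implicit Types (f g u : R -> R) (x a b : R).

Lemma is_derive_affine a b x : is_derive x 1 (fun t : R => a + t * b) b.
Proof.
have := is_deriveD (is_derive_cst a x 1)
  (is_deriveM (is_derive_id x 1) (is_derive_cst b x 1)).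
by rewrite /= scaler0 add0r scaler1 add0r.
Qed.

Lemma is_derive_big_sum (I : finType) (h : I -> R -> R) (dh : I -> R) x :
  (forall i, is_derive x 1 (h i) (dh i)) ->
  is_derive x 1 (fun t => \sum_i h i t) (\sum_i dh i).
Proof.
move=> dhx; rewrite -fct_sumE.
by elim/big_ind2 : _ => // *; [exact: is_derive_cst | exact: is_deriveD].
Qed.

Lemma is_derive_big_prod m (f : 'I_m -> R -> R) (df : 'I_m -> R) x :
  (forall k, is_derive x 1 (f k) (df k)) ->
  is_derive x 1 (fun t => \prod_(k < m) f k t)
    (\sum_(k < m) df k * \prod_(l < m | l != k) f l x).
Proof.
elim: m f df => [|m IHm] f df dfx.
  by rewrite -fct_prodE !big_ord0; exact: is_derive_cst.
have -> : (fun t => \prod_(k < m.+1) f k t) =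
    (fun t => \prod_(k < m) f (widen_ord (leqnSn m) k) t) * f ord_max.
  by apply/funext => t; rewrite big_ord_recr.
have max_neq (l : 'I_m) : (widen_ord (leqnSn m) l != ord_max).
  by rewrite -(inj_eq val_inj) /= ltn_eqF.
apply: (is_derive_eq (is_deriveM (IHm _ _ (fun k => dfx _)) (dfx ord_max))).
rewrite big_ord_recr /= addrC /GRing.scale /= mulr_sumr; congr (_ + _).
  rewrite mulrC; congr (_ * _); rewrite [RHS]big_mkcond big_ord_recr /= eqxx mulr1.
  by apply: eq_bigr => l _; rewrite max_neq.
apply: eq_bigr => k _; rewrite mulrCA; congr (_ * _).
rewrite [RHS]big_mkcond big_ord_recr /= eq_sym max_neq mulrC -big_mkcond /=.
by congr (_ * _); apply: eq_bigl => l; rewrite (inj_eq (@widen_ord_inj _ _ _)).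
Qed.

Lemma is_derive_unique f x (d d' : R) :
  is_derive x 1 f d -> is_derive x 1 f d' -> d = d'.
Proof. by move=> [_ <-] [_ <-]. Qed.

Lemma derive_eq0_of_abs_le g u a (dg : R) : 0 < a ->
  (forall x, `|x| < a -> derivable g x (1 : R)) ->
  (forall x, `|x| < a -> derivable u x (1 : R)) ->
  (forall x, `|x| < a -> `|g x| <= u x) -> `|g 0| = u 0 ->
  is_derive (0 : R) 1 u 0 -> is_derive (0 : R) 1 g dg -> dg = 0.
Proof.
move=> a_gt0 dg_ex du_ex g_le g0E du0 dg0.
pose sigma : R := if 0 <= g 0 then 1 else -1.
have sigma_neq0 : sigma != 0 by rewrite /sigma; case: ifP; rewrite ?oppr_eq0 oner_eq0.
have sigma_le y : sigma * y <= `|y|.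
  apply: le_trans (ler_norm _) _.
  by rewrite normrM /sigma; case: ifP; rewrite ?normrN normr1 mul1r.
have sigma_g0 : sigma * g 0 = `|g 0|.
  rewrite /sigma; case: ifPn => [/ger0_norm -> | ]; first by rewrite mul1r.
  by rewrite -ltNge => /ltr0_norm ->; rewrite mulN1r.
(* Taking [sigma * g] rather than [g ^+ 2] keeps the argument valid when [g 0 = 0]. *)
pose h := cst sigma * g - u.
have itvE t : (t \in `]-a, a[) = (`|t| < a) by rewrite in_itv /= ltr_norml.
have dh0 : is_derive (0 : R) 1 h 0.
  apply: (@derive1_at_max _ h (- a) a); first by lra.
  - move=> t; rewrite itvE => ht; apply: derivableB; last exact: du_ex.
    by apply: derivableM; [exact: derivable_cst | exact: dg_ex].
  - by rewrite itvE normr0.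
  move=> t; rewrite itvE => ht; rewrite /h !fctE sigma_g0 g0E subrr subr_le0.
  exact: le_trans (sigma_le _) (g_le _ ht).
have := is_deriveB (is_deriveM (is_derive_cst sigma (0 : R) 1) dg0) du0.
move=> /is_derive_unique /(_ dh0).
rewrite /= scaler0 addr0 subr0 /GRing.scale /= => /eqP.
by rewrite mulf_eq0 (negbTE sigma_neq0) => /eqP.
Qed.

End RealDerivatives.

Section CubicalMatrix.
Context {R : realType} {r n : nat}.
Implicit Types (A : cmatrix R r n) (x y w : 'I_n -> R) (p : R).

Lemma cm_formZ A (a : R) x : cm_form A (fun j => a * x j) = a ^+ r * cm_form A x.
Proof.
rewrite /cm_form mulr_sumr; apply: eq_bigr => i _.
by rewrite big_split /= prodr_const card_ord mulrCA.
Qed.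

Lemma cm_form_const A (c : R) : cm_form A (fun=> c) = c ^+ r * cm_sum A.
Proof.
have -> : (fun=> c) = (fun j : 'I_n => c * 1) by apply/funext => j; rewrite mulr1.
rewrite cm_formZ.
by congr (_ * _); apply: eq_bigr => i _; rewrite big1 ?mulr1.
Qed.

Lemma pnormZ p (a : R) x : 0 < p -> 0 <= a ->
  pnorm p (fun j => a * x j) = a * pnorm p x.
Proof.
move=> p_gt0 a_ge0; rewrite /pnorm.
under eq_bigr do rewrite normrM (ger0_norm a_ge0) powRM ?normr_ge0 //.
rewrite -mulr_sumr powRM ?powR_ge0 //; last by apply: sumr_ge0 => j _; exact: powR_ge0.
by rewrite -powRrM mulfV ?gt_eqF // powRr1.
Qed.

Lemma pnorm_eq1_norm_le1 p x j : 0 < p -> pnorm p x = 1 -> `|x j| <= 1.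
Proof.
move=> p_gt0 /(congr1 (@powR R ^~ p)); rewrite /pnorm -powRrM mulVf ?gt_eqF //.
rewrite powR1 powRr1 => [sum_eq1|]; last by apply: sumr_ge0 => k _; exact: powR_ge0.
have xj_le1 : `|x j| `^ p <= 1.
  rewrite -sum_eq1 (bigD1 j) //= lerDl.
  by apply: sumr_ge0 => k _; exact: powR_ge0.
have pV_ge0 : 0 <= p^-1 by rewrite invr_ge0 ltW.
have := ge0_ler_powR pV_ge0 _ _ xj_le1.
by rewrite -powRrM mulfV ?gt_eqF // powRr1 // powR1; apply; rewrite nnegrE ?powR_ge0.
Qed.

Lemma abs_cm_form_le_eta A p x : 0 < p -> pnorm p x = 1 ->
  `|cm_form A x| <= eta p A.
Proof.
move=> p_gt0 x1; apply: ub_le_sup; last by exists x.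
exists (\sum_i `|A i|) => _ [y y1 <-].
apply: le_trans (ler_norm_sum _ _ _) _; apply: ler_sum => i _.
rewrite normrM -[leRHS]mulr1 ler_wpM2l // normr_prod.
apply: prodr_ile1 => k _; rewrite normr_ge0.
exact: pnorm_eq1_norm_le1 p_gt0 y1.
Qed.

Lemma abs_cm_form_le A p y : 0 < p -> 0 < pnorm p y ->
  `|cm_form A y| <= eta p A * pnorm p y ^+ r.
Proof.
move=> p_gt0 y_gt0; set b := pnorm p y.
have yE : y = (fun j => b * (b^-1 * y j)).
  by apply/funext => j; rewrite mulrA mulfV ?gt_eqF // mul1r.
have z1 : pnorm p (fun j => b^-1 * y j) = 1.
  by rewrite pnormZ ?invr_ge0 ?ltW // mulVf ?gt_eqF.
rewrite [in X in `|X|]yE cm_formZ normrM normrX (gtr0_norm y_gt0) mulrC.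
apply: ler_wpM2r; first by rewrite exprn_ge0 ?ltW.
exact: abs_cm_form_le_eta.
Qed.

Lemma sumr_delta (f : 'I_n -> R) j0 : \sum_j (j == j0)%:R * f j = f j0.
Proof.
rewrite (bigD1 j0) //= eqxx mul1r big1 ?addr0 // => j /negPf ->.
exact: mul0r.
Qed.

Lemma line_gt0 (c u : R) w j : `|u| < c / (1 + \sum_i `|w i|) -> 0 < c + u * w j.
Proof.
move=> u_lt; have w_gt0 : 0 < 1 + \sum_i `|w i| by rewrite ltr_wpDr ?sumr_ge0.
suff : `|u * w j| < c by rewrite ltr_norml; lra.
rewrite normrM (@le_lt_trans _ _ (`|u| * (1 + \sum_i `|w i|))) //.
  by rewrite ler_wpM2l // ler_wpDl // (bigD1 j) //= lerDl sumr_ge0.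
by rewrite -ltr_pdivlMr.
Qed.

Lemma sum_powR_gt0 p x : (0 < n)%N -> (forall j, 0 < x j) ->
  0 < \sum_j x j `^ p.
Proof.
move=> n_gt0 x_gt0; rewrite (bigD1 (Ordinal n_gt0)) //=.
by apply: ltr_wpDr; [apply: sumr_ge0 => j _; exact: powR_ge0 | exact: powR_gt0].
Qed.

Lemma slice_sum_sym A k k' s : cm_symmetric A -> slice_sum A k s = slice_sum A k' s.
Proof.
move=> symA; pose swap (i : mindex r n) : mindex r n := [ffun l => i (tperm k k' l)].
have swapK : involutive swap by move=> i; apply/ffunP => l; rewrite !ffunE tpermK.
rewrite /slice_sum (reindex_inj (inv_inj swapK)) /=.
by apply: eq_big => i; [rewrite ffunE tpermL | rewrite symA].
Qed.

Lemma first_variationE A w :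
  \sum_i A i * \sum_(k < r) w (i k) = \sum_(k < r) \sum_j w j * slice_sum A k j.
Proof.
under eq_bigr do rewrite mulr_sumr.
rewrite exchange_big /=; apply: eq_bigr => k _.
rewrite (partition_big (fun i : mindex r n => i k) predT) //=.
apply: eq_bigr => j _; rewrite /slice_sum mulr_sumr.
by apply: eq_bigr => i /eqP <-; rewrite mulrC.
Qed.

Lemma is_derive_cm_form_line A x w (t : R) :
  is_derive t 1 (fun u => cm_form A (fun j => x j + u * w j))
    (\sum_i A i *
       \sum_(k < r) w (i k) * \prod_(l < r | l != k) (x (i l) + t * w (i l))).
Proof.
apply: is_derive_big_sum => i.
have := is_deriveM (is_derive_cst (A i) t 1)
  (is_derive_big_prod _ _ _ t (fun k => is_derive_affine (x (i k)) (w (i k)) t)).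
by rewrite scaler0 addr0.
Qed.

Lemma is_derive_cm_form_const_line A (c : R) w :
  is_derive (0 : R) 1 (fun u => cm_form A (fun j => c + u * w j))
    (c ^+ r.-1 * \sum_i A i * \sum_(k < r) w (i k)).
Proof.
apply: is_derive_eq (is_derive_cm_form_line A (fun=> c) w 0) _.
rewrite [RHS]mulr_sumr; apply: eq_bigr => i _; rewrite [RHS]mulrCA.
congr (_ * _); rewrite mulr_sumr; apply: eq_bigr => k _.
under eq_bigr do rewrite mul0r addr0.
by rewrite prodr_const cardC1 card_ord mulrC.
Qed.

Lemma is_derive_root_powsum p x w (t : R) : (0 < n)%N ->
  (forall j, 0 < x j + t * w j) ->
  is_derive t 1 (fun u => (\sum_j (x j + u * w j) `^ p) `^ p^-1)
    (p^-1 * (\sum_j (x j + t * w j) `^ p) `^ (p^-1 - 1) *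
     \sum_j p * (x j + t * w j) `^ (p - 1) * w j).
Proof.
move=> n_gt0 xw_gt0.
have dS : is_derive t 1 (fun u => \sum_j (x j + u * w j) `^ p)
    (\sum_j p * (x j + t * w j) `^ (p - 1) * w j).
  apply: is_derive_big_sum => j.
  exact: (@is_derive1_comp _ (@powR R ^~ p) (fun u => x j + u * w j) t _ _
    (is_derive1_powR p (xw_gt0 j)) (is_derive_affine _ _ t)).
have S_gt0 := sum_powR_gt0 p _ n_gt0 xw_gt0.
exact: (@is_derive1_comp _ (@powR R ^~ p^-1) _ t _ _ (is_derive1_powR p^-1 S_gt0) dS).
Qed.

Lemma is_derive_root_powsum_const_line p (c : R) w : (0 < n)%N -> 0 < c ->
  \sum_j w j = 0 ->
  is_derive (0 : R) 1 (fun u => (\sum_j (c + u * w j) `^ p) `^ p^-1) 0.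
Proof.
move=> n_gt0 c_gt0 sum_w0.
apply: is_derive_eq (is_derive_root_powsum p (fun=> c) w 0 n_gt0 _) _.
  by move=> j; rewrite mul0r addr0.
rewrite [X in _ * X](eq_bigr (fun j => p * c `^ (p - 1) * w j)) => [|j _].
  by rewrite -mulr_sumr sum_w0 !mulr0.
by rewrite mul0r addr0.
Qed.

Lemma pnorm_uniform p : 0 < p -> (0 < n)%N ->
  pnorm p (fun _ : 'I_n => n%:R `^ (- p^-1)) = 1.
Proof.
move=> p_gt0 n_gt0; have nR_gt0 : 0 < n%:R :> R by rewrite ltr0n.
have -> : (fun _ : 'I_n => n%:R `^ (- p^-1)) = (fun j => n%:R `^ (- p^-1) * 1).
  by apply/funext => j; rewrite mulr1.
rewrite pnormZ ?powR_ge0 //.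
rewrite /pnorm; under eq_bigr do rewrite normr1 powR1.
by rewrite sumr_const card_ord -mulr_natr mul1r powRN mulVf ?gt_eqF ?powR_gt0.
Qed.

Lemma cm_form_uniform A p :
  `|cm_form A (fun _ : 'I_n => n%:R `^ (- p^-1))| =
  n%:R `^ (- (r%:R / p)) * `|cm_sum A|.
Proof.
rewrite cm_form_const normrM normrX ger0_norm ?powR_ge0 //.
congr (_ * _); rewrite -powR_mulrn; last exact: powR_ge0.
by rewrite -powRrM mulNr (mulrC p^-1).
Qed.

Lemma uniform_extremal_first_variation A p w : 0 < p -> (0 < n)%N ->
  eta p A = n%:R `^ (- (r%:R / p)) * `|cm_sum A| -> \sum_j w j = 0 ->
  \sum_i A i * \sum_(k < r) w (i k) = 0.
Proof.
move=> p_gt0 n_gt0 etaE sum_w0.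
set c := n%:R `^ (- p^-1); have c_gt0 : 0 < c by rewrite powR_gt0 // ltr0n.
set a := c / (1 + \sum_j `|w j|).
have a_gt0 : 0 < a by rewrite divr_gt0 // ltr_wpDr ?sumr_ge0.
pose b u := (\sum_j (c + u * w j) `^ p) `^ p^-1.
have pnormE u : `|u| < a -> pnorm p (fun j => c + u * w j) = b u.
  move=> ua; rewrite /pnorm.
  by under eq_bigr => j _ do rewrite gtr0_norm ?(line_gt0 _ _ _ _ ua) //.
have a0 : `|0 : R| < a by rewrite normr0.
have const0 : (fun j => c + 0 * w j) = fun=> c.
  by apply/funext => j; rewrite mul0r addr0.
have b0 : b 0 = 1 by rewrite -pnormE // const0 pnorm_uniform.
suff /eqP : c ^+ r.-1 * \sum_i A i * \sum_(k < r) w (i k) = 0.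
  by rewrite mulf_eq0 expf_eq0 (gt_eqF c_gt0) andbF => /eqP.
apply: (derive_eq0_of_abs_le _ (cst (eta p A) * b ^+ r) _ _ a_gt0 _ _ _ _ _
  (is_derive_cm_form_const_line A c w)).
- by move=> u _; have [] := is_derive_cm_form_line A (fun=> c) w u.
- move=> u ua; apply: derivableM; first exact: derivable_cst.
  apply: derivableX.
  have xw_gt0 j : 0 < c + u * w j := line_gt0 _ _ _ j ua.
  by have [] := is_derive_root_powsum p (fun=> c) w u n_gt0 xw_gt0.
- move=> u ua; rewrite !fctE -pnormE //.
  apply: abs_cm_form_le => //; rewrite pnormE // powR_gt0 // sum_powR_gt0 //.
  by move=> j; exact: line_gt0 _ _ _ j ua.
- by rewrite !fctE b0 expr1n mulr1 const0 etaE cm_form_uniform.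
have := is_deriveM (is_derive_cst (eta p A) (0 : R) 1)
  (is_deriveX r (is_derive_root_powsum_const_line p c w n_gt0 c_gt0 sum_w0)).
by rewrite !scaler0 addr0.
Qed.

End CubicalMatrix.

Theorem proposition18 (R : realType) (r n : nat) (A : cmatrix R r n) (p : R) :
  cm_symmetric A -> 1 < p ->
  eta p A = (n%:R : R) `^ (- (r%:R / p)) * `|cm_sum A| ->
  cm_regular A.
Proof.
move=> symA p_gt1 etaE k s t.
have n_gt0 : (0 < n)%N := leq_ltn_trans (leq0n s) (ltn_ord s).
pose w j : R := (j == s)%:R - (j == t)%:R.
have sum_wE f : \sum_j w j * f j = f s - f t.
  by under eq_bigr do rewrite mulrBl; rewrite sumrB !sumr_delta.
have sum_w0 : \sum_j w j = 0.
  rewrite -[RHS](subrr (1 : R)) -(sum_wE (fun=> 1)).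
  by apply: eq_bigr => j _; rewrite mulr1.
have p_gt0 : 0 < p := lt_trans ltr01 p_gt1.
have := uniform_extremal_first_variation A p w p_gt0 n_gt0 etaE sum_w0.
rewrite first_variationE.
under eq_bigr => k' _ do rewrite sum_wE !(slice_sum_sym _ k' k) //.
rewrite sumr_const card_ord => /eqP; rewrite mulrn_eq0 subr_eq0.
by rewrite (gtn_eqF (leq_ltn_trans (leq0n k) (ltn_ord k))) => /eqP.
Qed.
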